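(* Let $\alpha>0$. For $\theta\in[0,\pi]$ let $\lambda=\lambda(\theta;\alpha)\ge0$ satisfy $\cosh\lambda=1+\alpha-\alpha\cos\theta$, and define $$R_2(\alpha)=\frac{\alpha}{2\pi}\int_0^\pi\left(\frac{1}{\sinh\lambda}-\frac{1}{\sqrt{\alpha}\,\theta}\right)d\theta .$$ Then $$R_2(\alpha)=\frac{\sqrt{\alpha}}{4\pi}\ln\left(\frac{16}{\pi^2(\alpha+1)}\right).$$ *)

From Stdlib Require Import Reals.
From Coquelicot Require Export Coquelicot.
Export Reals.
Open Scope R_scope.

Definition R2_integrand (alpha : R) (lam : R -> R) (theta : R) : R :=
  / sinh (lam theta) - / (sqrt alpha * theta).

From Stdlib Require Import Reals Lra Psatz.
From Coquelicot Require Import Coquelicot.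
Open Scope R_scope.

(* With s = sin (theta/2) we have cos theta = 1 - 2 s^2, so cosh lambda = 1 + 2 alpha s^2 and
   sinh lambda = 2 sqrt alpha s sqrt (1 + alpha s^2): the integrand is alpha^(-1/2) times
     1 / (2 s sqrt (1 + alpha s^2)) - 1 / theta,
   which has the elementary primitive
     ln (sin (theta/2) / theta) - ln (cos (theta/2) + sqrt (1 + alpha s^2)).
   Its value at pi is - ln pi - ln (1 + alpha) / 2 and its limit at 0 is - 2 ln 2.
   The integrand is odd and O(theta) near 0, hence continuous there, while the primitive is
   only shown to be continuous at 0; so the fundamental theorem of calculus is used in a form
   that needs differentiability in the interior only. *)

Lemma is_RInt_derive_interior (f g : R -> R) (c a b d : R) :
  c < a -> a <= b -> b < d ->
  (forall x, c < x < d -> continuous g x) ->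
  (forall x, a < x < b -> is_derive f x (g x)) ->
  (forall x, a <= x <= b -> continuous f x) ->
  is_RInt g a b (f b - f a).
Proof.
  intros Hca Hab Hbd Hg Hf Hfc.
  assert (Hint : forall y, c < y < d -> ex_RInt g a y).
  { intros y Hy. apply (ex_RInt_continuous (V := R_CompleteNormedModule)).
    intros z [Hz1 Hz2]. apply Hg. split.
    - apply Rlt_le_trans with (Rmin a y); [apply Rmin_glb_lt|]; lra.
    - apply Rle_lt_trans with (Rmax a y); [|apply Rmax_lub_lt]; lra. }
  set (Phi := fun y => RInt g a y).
  assert (HPhi : forall y, c < y < d -> is_derive Phi y (g y)).
  { intros y Hy. apply (is_derive_RInt (V := R_NormedModule) g Phi a y).
    - apply (locally_interval _ y c d); simpl; try lra.
      intros z Hz1 Hz2. apply (RInt_correct (V := R_CompleteNormedModule)), Hint. lra.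
    - apply Hg. lra. }
  destruct (MVT_gen (fun y => Phi y - f y) a b (fun _ => 0)) as [x [_ Hx]].
  - rewrite Rmin_left, Rmax_right by lra. intros x Hx.
    assert (H := is_derive_minus _ _ _ _ _ (HPhi x ltac:(lra)) (Hf x Hx)).
    rewrite minus_eq_zero in H. exact H.
  - rewrite Rmin_left, Rmax_right by lra. intros x Hx.
    apply continuity_pt_minus; apply continuity_pt_filterlim.
    + apply (ex_derive_continuous (K := R_AbsRing) (V := R_NormedModule)).
      exists (g x). apply HPhi. lra.
    + apply Hfc. exact Hx.
  - replace (f b - f a) with (Phi b).
    + apply (RInt_correct (V := R_CompleteNormedModule)), Hint. lra.
    + unfold Phi in *. simpl in Hx. rewrite RInt_point in Hx. unfold zero in Hx. simpl in Hx. lra.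
Qed.

Lemma continuous_0_of_symmetric_bound (f : R -> R) (C : R) : 0 < C ->
  (forall t, Rabs (f (- t) - f 0) = Rabs (f t - f 0)) ->
  (forall t, 0 < t <= 1 -> Rabs (f t - f 0) <= C * t) ->
  continuous f 0.
Proof.
  intros HC Hsym Hbound. apply continuity_pt_filterlim. intros eps Heps.
  exists (Rmin 1 (eps / (2 * C))). split.
  { apply Rmin_pos; [lra | apply Rdiv_lt_0_compat; lra]. }
  intros x [[_ Hx0] Hx]. simpl in *. unfold R_dist in *. rewrite Rminus_0_r in Hx.
  assert (Hx1 := Rmin_l 1 (eps / (2 * C))).
  assert (Hx2 := Rmin_r 1 (eps / (2 * C))).
  assert (Habs : Rabs (f x - f 0) <= C * Rabs x).
  { destruct (Rlt_or_le 0 x) as [Hpos | Hneg].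
    - rewrite (Rabs_pos_eq x) in * by lra. apply Hbound. lra.
    - rewrite (Rabs_left x) in * by lra.
      rewrite <- Hsym. apply Hbound. lra. }
  assert (C * Rabs x <= C * (eps / (2 * C))) by (apply Rmult_le_compat_l; lra).
  replace (C * (eps / (2 * C))) with (eps / 2) in * by (field; lra).
  lra.
Qed.

Lemma sin_ge_cubic x : 0 <= x <= 4 -> x - x ^ 3 / 6 <= sin x.
Proof.
  intros Hx. destruct (pre_sin_bound x 0) as [H _]; try lra.
  unfold sin_approx, sin_term in H. simpl in H. lra.
Qed.

Lemma sin_half_pos t : 0 < t < 2 * PI -> 0 < sin (t / 2).
Proof. intros Ht. apply sin_gt_0; lra. Qed.

Lemma sin_half_neq0 t : - (2 * PI) < t < 2 * PI -> t <> 0 -> sin (t / 2) <> 0.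
Proof.
  intros Ht Ht0. destruct (Rlt_or_le 0 t).
  - apply Rgt_not_eq, sin_half_pos. lra.
  - apply Rlt_not_eq, sin_lt_0_var; lra.
Qed.

Lemma sinh_ge0 x : 0 <= x -> 0 <= sinh x.
Proof.
  intros Hx. rewrite <- sinh_0. destruct (Req_dec x 0) as [-> | Hx0]; [lra|].
  left. apply sinh_lt. lra.
Qed.

Lemma sinh_eq_sqrt_cosh x : 0 <= x -> sinh x = sqrt (cosh x ^ 2 - 1).
Proof.
  intros Hx.
  replace (cosh x ^ 2 - 1) with (sinh x ^ 2).
  - rewrite sqrt_pow2; [reflexivity | apply sinh_ge0; exact Hx].
  - unfold cosh, sinh. rewrite exp_Ropp. assert (H := exp_pos x). field. lra.
Qed.

Lemma sinh_of_cosh_half_angle a l th : 0 <= a -> 0 <= l -> 0 <= sin (th / 2) ->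
  cosh l = 1 + a - a * cos th ->
  sinh l = 2 * sqrt a * sin (th / 2) * sqrt (1 + a * sin (th / 2) ^ 2).
Proof.
  intros Ha Hl Hs Hc.
  assert (Hcos : cos th = 1 - 2 * sin (th / 2) * sin (th / 2)).
  { rewrite <- cos_2a_sin. f_equal. field. }
  set (s := sin (th / 2)) in *.
  assert (Hq : 0 <= 1 + a * s ^ 2) by nra.
  rewrite sinh_eq_sqrt_cosh, Hc, Hcos by exact Hl.
  replace ((1 + a - a * (1 - 2 * s * s)) ^ 2 - 1)
    with ((2 * s) ^ 2 * (a * (1 + a * s ^ 2))) by ring.
  rewrite !sqrt_mult, sqrt_pow2 by nra. ring.
Qed.

Lemma ln_sqrt x : 0 < x -> ln (sqrt x) = ln x / 2.
Proof.
  intros Hx. rewrite <- (pow2_sqrt x) at 2 by lra.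
  rewrite ln_pow by (apply sqrt_lt_R0; exact Hx). simpl INR. field.
Qed.

Definition reduced_integrand (a t : R) : R :=
  / (2 * sin (t / 2) * sqrt (1 + a * sin (t / 2) ^ 2)) - / t.

Lemma R2_integrand_reduced alpha lam theta : 0 < alpha -> 0 < theta <= PI ->
  0 <= lam theta /\ cosh (lam theta) = 1 + alpha - alpha * cos theta ->
  R2_integrand alpha lam theta = / sqrt alpha * reduced_integrand alpha theta.
Proof.
  intros Ha Hth [Hl Hc].
  assert (Hs := sin_half_pos theta ltac:(lra)).
  unfold R2_integrand, reduced_integrand.
  rewrite (sinh_of_cosh_half_angle alpha (lam theta) theta) by lra.
  assert (0 < sqrt alpha) by (apply sqrt_lt_R0; exact Ha).
  assert (0 < sqrt (1 + alpha * sin (theta / 2) ^ 2)) by (apply sqrt_lt_R0; nra).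
  field. repeat split; lra.
Qed.

Lemma reduced_integrand_odd a t : reduced_integrand a (- t) = - reduced_integrand a t.
Proof.
  unfold reduced_integrand. replace (- t / 2) with (- (t / 2)) by field.
  rewrite sin_neg.
  replace (1 + a * (- sin (t / 2)) ^ 2) with (1 + a * sin (t / 2) ^ 2) by ring.
  replace (2 * - sin (t / 2)) with (- (2 * sin (t / 2))) by ring.
  rewrite Ropp_mult_distr_l_reverse, !Rinv_opp. ring.
Qed.

(* Here [/ 0 = 0] makes both terms vanish; 0 is also the limit at [t = 0]. *)
Lemma reduced_integrand_0 a : reduced_integrand a 0 = 0.
Proof.
  unfold reduced_integrand. replace (0 / 2) with 0 by field.
  rewrite sin_0, !Rmult_0_r, Rmult_0_l, Rinv_0. ring.
Qed.

Lemma reduced_integrand_bound a t : 0 < a -> 0 < t <= 1 ->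
  Rabs (reduced_integrand a t) <= (1 + a) * t.
Proof.
  intros Ha Ht. unfold reduced_integrand.
  set (x := t / 2). replace t with (2 * x) by (unfold x; field).
  assert (Hx : 0 < x <= 1 / 2) by (unfold x; lra).
  assert (Hs1 := sin_ge_cubic x ltac:(lra)). assert (Hs2 := sin_lt_x x ltac:(lra)).
  set (s := sin x) in *.
  assert (Hs : x / 2 <= s) by nra.
  set (r := sqrt (1 + a * s ^ 2)).
  assert (Hr2 : r * r = 1 + a * s ^ 2) by (apply sqrt_sqrt; nra).
  assert (Hr1 : 1 <= r) by (assert (0 <= r) by apply sqrt_pos; nra).
  replace (/ (2 * s * r) - / (2 * x)) with ((x - s) / (2 * x * s) - (r - 1) / (2 * s * r))
    by (field; split; lra).
  (* The pieces are controlled by [x - s <= x^3/6] and [r - 1 = a s^2 / (r + 1) <= a s^2 / 2]. *)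
  assert (Hsin : 0 <= (x - s) / (2 * x * s) <= x).
  { split; [apply Rle_div_r | apply Rle_div_l]; nra. }
  assert (Hr : 2 * (r - 1) <= a * s ^ 2) by nra.
  assert (0 <= a * s * (x * r - s)) by (apply Rmult_le_pos; nra).
  assert (Hsqrt : 0 <= (r - 1) / (2 * s * r) <= a * x).
  { split; [apply Rle_div_r | apply Rle_div_l]; nra. }
  apply Rabs_le. nra.
Qed.

Lemma reduced_integrand_continuous a t : 0 < a -> - (2 * PI) < t < 2 * PI ->
  continuous (reduced_integrand a) t.
Proof.
  intros Ha Ht. destruct (Req_dec t 0) as [-> | Ht0].
  - apply (continuous_0_of_symmetric_bound _ (1 + a)); [lra | |].
    + intros u. rewrite reduced_integrand_odd, reduced_integrand_0, !Rminus_0_r.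
      apply Rabs_Ropp.
    + intros u Hu. rewrite reduced_integrand_0, Rminus_0_r.
      apply reduced_integrand_bound; assumption.
  - apply (ex_derive_continuous (K := R_AbsRing) (V := R_NormedModule)).
    unfold reduced_integrand. auto_derive.
    assert (Hs := sin_half_neq0 t Ht Ht0).
    replace (t * / 2) with (t / 2) by reflexivity.
    assert (0 < 1 + a * (sin (t / 2) * (sin (t / 2) * 1))) by nra.
    assert (0 < sqrt (1 + a * (sin (t / 2) * (sin (t / 2) * 1)))) by (apply sqrt_lt_R0; lra).
    repeat split; try lra.
    apply Rmult_integral_contrapositive_currified; [|lra].
    apply Rmult_integral_contrapositive_currified; [lra | exact Hs].
Qed.

Definition sinc_half (t : R) : R := if Req_EM_T t 0 then 1 / 2 else sin (t / 2) / t.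

Lemma sinc_half_neq0 t : t <> 0 -> sinc_half t = sin (t / 2) / t.
Proof. intros Ht. unfold sinc_half. destruct (Req_EM_T t 0); [contradiction | reflexivity]. Qed.

Lemma sinc_half_0 : sinc_half 0 = 1 / 2.
Proof. unfold sinc_half. destruct (Req_EM_T 0 0); [reflexivity | contradiction]. Qed.

Lemma sinc_half_even t : sinc_half (- t) = sinc_half t.
Proof.
  destruct (Req_dec t 0) as [-> | Ht]; [rewrite Ropp_0; reflexivity|].
  rewrite !sinc_half_neq0 by lra.
  replace (- t / 2) with (- (t / 2)) by field. rewrite sin_neg. field. exact Ht.
Qed.

Lemma sinc_half_continuous_0 : continuous sinc_half 0.
Proof.
  apply (continuous_0_of_symmetric_bound _ 1); [lra | |].
  - intros t. rewrite sinc_half_even. reflexivity.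
  - intros t Ht. rewrite sinc_half_0, sinc_half_neq0 by lra.
    assert (Hs1 := sin_ge_cubic (t / 2) ltac:(lra)). assert (Hs2 := sin_lt_x (t / 2) ltac:(lra)).
    replace (sin (t / 2) / t - 1 / 2) with ((sin (t / 2) - t / 2) / t) by (field; lra).
    apply Rabs_le. split; [apply Rle_div_r | apply Rle_div_l]; nra.
Qed.

Definition reduced_primitive (a t : R) : R :=
  ln (sinc_half t) - ln (cos (t / 2) + sqrt (1 + a * sin (t / 2) ^ 2)).

Lemma reduced_primitive_continuous_0 a : continuous (reduced_primitive a) 0.
Proof.
  apply (continuous_minus (K := R_AbsRing) (V := R_NormedModule)
    (fun t => ln (sinc_half t)) (fun t => ln (cos (t / 2) + sqrt (1 + a * sin (t / 2) ^ 2)))).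
  - apply (continuous_comp sinc_half ln); [exact sinc_half_continuous_0 |].
    rewrite sinc_half_0. apply (ex_derive_continuous (K := R_AbsRing) (V := R_NormedModule)).
    auto_derive. lra.
  - apply (ex_derive_continuous (K := R_AbsRing) (V := R_NormedModule)).
    auto_derive. replace (0 * / 2) with 0 by field. rewrite sin_0, cos_0.
    replace (1 + a * (0 * (0 * 1))) with 1 by ring. rewrite sqrt_1. lra.
Qed.

Lemma half_angle_primitive_slope a s c r : s <> 0 -> r <> 0 -> c + r <> 0 ->
  s ^ 2 + c ^ 2 = 1 -> r ^ 2 = 1 + a * s ^ 2 ->
  c / (2 * s) - (- s / 2 + a * s * c / (2 * r)) / (c + r) = / (2 * s * r).
Proof.
  intros Hs Hr Hcr Hsc Hr2. field_simplify_eq; [| tauto].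
  replace (c ^ 2 * r - c * s ^ 2 * a + c * r ^ 2 + s ^ 2 * r)
    with (r * (s ^ 2 + c ^ 2) + c * r ^ 2 - c * a * s ^ 2) by ring.
  rewrite Hsc, Hr2. ring.
Qed.

Lemma reduced_primitive_derive a t : 0 < a -> 0 < t < 2 * PI ->
  is_derive (reduced_primitive a) t (reduced_integrand a t).
Proof.
  intros Ha Ht.
  apply is_derive_ext_loc with
    (f := fun u => ln (sin (u / 2) / u) - ln (cos (u / 2) + sqrt (1 + a * sin (u / 2) ^ 2))).
  { apply (locally_interval _ t 0 p_infty); simpl; [lra | exact I |].
    intros u Hu _. unfold reduced_primitive. rewrite sinc_half_neq0 by lra. reflexivity. }
  assert (Hs := sin_half_pos t Ht). assert (Hsc := sin2_cos2 (t / 2)). unfold Rsqr in Hsc.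
  unfold reduced_integrand.
  set (s := sin (t / 2)) in *. set (c := cos (t / 2)) in *.
  set (r := sqrt (1 + a * s ^ 2)).
  assert (Hr2 : r * r = 1 + a * s ^ 2) by (apply sqrt_sqrt; nra).
  assert (Hr1 : 1 <= r) by (assert (0 <= r) by apply sqrt_pos; nra).
  assert (Hcr : 0 < c + r) by nra.
  auto_derive; change (t * / 2) with (t / 2); fold s c;
    replace (1 + a * (s * (s * 1))) with (1 + a * s ^ 2) by ring; fold r.
  - repeat split; try lra; [|nra].
    apply Rmult_lt_0_compat; [exact Hs | apply Rinv_0_lt_compat; lra].
  - rewrite <- (half_angle_primitive_slope a s c r) by (try lra; nra).
    field. repeat split; lra.
Qed.

Lemma reduced_primitive_continuous a t : 0 < a -> 0 <= t < 2 * PI ->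
  continuous (reduced_primitive a) t.
Proof.
  intros Ha Ht. destruct (Req_dec t 0) as [-> | Ht0].
  - apply reduced_primitive_continuous_0.
  - apply (ex_derive_continuous (K := R_AbsRing) (V := R_NormedModule)).
    exists (reduced_integrand a t). apply reduced_primitive_derive; lra.
Qed.

Lemma reduced_primitive_increment a : -1 < a ->
  reduced_primitive a PI - reduced_primitive a 0 = ln (16 / (PI ^ 2 * (a + 1))) / 2.
Proof.
  intros Ha. assert (HPI := PI_RGT_0).
  unfold reduced_primitive.
  rewrite sinc_half_0, sinc_half_neq0, sin_PI2, cos_PI2 by lra.
  replace (0 / 2) with 0 by field. rewrite sin_0, cos_0.
  replace (1 + a * 0 ^ 2) with 1 by ring. replace (1 + a * 1 ^ 2) with (a + 1) by ring.
  rewrite sqrt_1, Rplus_0_l, ln_sqrt by lra.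
  replace 16 with (2 ^ 4) by ring. replace (1 + 1) with 2 by ring.
  assert (0 < PI ^ 2 * (a + 1)) by (apply Rmult_lt_0_compat; [apply pow_lt |]; lra).
  rewrite !ln_div, ln_mult, !ln_pow, ln_1 by (first [lra | apply pow_lt; lra]).
  simpl INR. field.
Qed.

Theorem mainTheorem5 (alpha : R) (lam : R -> R)
  (halpha : 0 < alpha)
  (hlam : forall theta, 0 <= theta <= PI ->
            0 <= lam theta /\ cosh (lam theta) = 1 + alpha - alpha * cos theta) :
  exists I : R,
    is_RInt (R2_integrand alpha lam) 0 PI I /\
    alpha / (2 * PI) * I = sqrt alpha / (4 * PI) * ln (16 / (PI ^ 2 * (alpha + 1))).
Proof.
  assert (HPI := PI_RGT_0).
  exists (/ sqrt alpha * (reduced_primitive alpha PI - reduced_primitive alpha 0)). split.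
  - apply is_RInt_ext with (f := fun theta => scal (/ sqrt alpha) (reduced_integrand alpha theta)).
    { rewrite Rmin_left, Rmax_right by lra. intros theta Htheta.
      symmetry. apply R2_integrand_reduced, hlam; lra. }
    apply (is_RInt_scal (V := R_NormedModule)).
    apply (is_RInt_derive_interior _ _ (- PI) _ _ (2 * PI)); try lra.
    + intros t Ht. apply reduced_integrand_continuous; lra.
    + intros t Ht. apply reduced_primitive_derive; lra.
    + intros t Ht. apply reduced_primitive_continuous; lra.
  - rewrite reduced_primitive_increment by lra.
    assert (Hsqrt : 0 < sqrt alpha) by (apply sqrt_lt_R0; exact halpha).
    rewrite <- (sqrt_sqrt alpha) at 1 by lra.
    field. lra.
Qed.
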